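(* Let $(\mathbb{F}(\alpha,\beta),\sigma)$ be a bivariate difference field extension of a difference field $(\mathbb{F},\sigma)$, and let $g\in\mathbb{F}(\alpha,\beta)$ be a nonzero rational function. Suppose $$\frac{\sigma g}{g}=\frac{p}{q},$$ where $p,q\in\mathbb{F}[\alpha,\beta]$ are nonzero polynomials with $\gcd(p,q)=1$. Then either $p,q\in\mathbb{F}$, or $\mathrm{Spr}_\sigma(p,q)\cup\mathrm{Spr}_\sigma(q,p)\neq\emptyset$.
   Context: A bivariate difference field extension $(\mathbb{F}(\alpha,\beta),\sigma)$ of a difference field $(\mathbb{F},\sigma)$ is the rational function field $\mathbb{F}(\alpha,\beta)$ in two algebraically independent transcendental elements $\alpha,\beta$ over $\mathbb{F}$, together with an automorphism $\sigma$ of $\mathbb{F}(\alpha,\beta)$ extending $\sigma$ on $\mathbb{F}$ and satisfying $\sigma(\alpha)=\beta$, $\sigma(\beta)=u\alpha+v\beta$ with $v\in\mathbb{F}$, $u\in\mathbb{F}\setminus\{0\}$. $\deg$ denotes total degree in $\alpha,\beta$. For nonzero $p,q\in\mathbb{F}[\alpha,\beta]$, the spread is $\mathrm{Spr}_\sigma(p,q)=\{m\in\mathbb{N} : \deg(\gcd(p,\sigma^m q))>0\}$. *)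

From HB Require Import structures.
From mathcomp Require Import all_boot all_order all_algebra.
From mathcomp Require Import fraction generic_quotient.
From mathcomp Require Import mpoly.
Set Implicit Arguments. Unset Strict Implicit. Unset Printing Implicit Defensive.
Import Order.TTheory GRing.Theory.
Local Open Scope ring_scope.

Notation "x %:F" := (@FracField.tofrac _ x) : ring_scope.

Definition alpha (F : fieldType) : {mpoly F[2]} := 'X_(0 : 'I_2).
Definition beta (F : fieldType) : {mpoly F[2]} := 'X_(1 : 'I_2).

Definition sigma_var (F : fieldType) (u v : F) (i : 'I_2) : {mpoly F[2]} :=
  if i == 0 then beta F else u%:MP * alpha F + v%:MP * beta F.

Definition sigmaP (F : fieldType) (s : F -> F) (u v : F) (p : {mpoly F[2]})
  : {mpoly F[2]} :=
  mmap (fun c => (s c)%:MP) (sigma_var u v) p.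

Definition sigmaR (F : fieldType) (s : F -> F) (u v : F)
  (g : {fraction {mpoly F[2]}}) : {fraction {mpoly F[2]}} :=
  let r := repr g in
  (sigmaP s u v (\n_r))%:F / (sigmaP s u v (\d_r))%:F.

Definition tdeg (F : fieldType) (p : {mpoly F[2]}) : nat := (msize p).-1.

Definition mdvd (F : fieldType) (d p : {mpoly F[2]}) : Prop :=
  exists r : {mpoly F[2]}, p = r * d.

Definition gcd_deg_pos (F : fieldType) (p q : {mpoly F[2]}) : Prop :=
  exists d : {mpoly F[2]}, (0 < tdeg d)%N /\ mdvd d p /\ mdvd d q.

Definition coprime_mp (F : fieldType) (p q : {mpoly F[2]}) : Prop :=
  forall d : {mpoly F[2]}, mdvd d p -> mdvd d q -> tdeg d = 0%N.

Definition in_Spr (F : fieldType) (s : F -> F) (u v : F) (p q : {mpoly F[2]})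
  (m : nat) : Prop :=
  gcd_deg_pos p (iter m (sigmaP s u v) q).

Definition is_const (F : fieldType) (p : {mpoly F[2]}) : Prop :=
  exists c : F, p = c%:MP.

(* Write g = a / b, so that p a (sigma b) = q (sigma a) b in F[alpha, beta].  If, say, p
   is not constant, pick a prime factor f0 of p and follow a prime f, associate to
   sigma^j f0 for some integer j, that divides the cofactor P of an identity
   P a (sigma b) = q (sigma a) b.  If f divides q, then f is a common factor of q and
   sigma^j p when j >= 0, and sigma^-j f is a common factor of p and sigma^-j q otherwise.
   If not, f divides sigma a or b; cancelling it, and replacing f by sigma^-1 f or sigma f,
   gives an identity of the same shape with deg a + deg b smaller, so this cannot go on
   forever.  Irreducible elements of F[alpha, beta] are prime by Gauss's lemma in
   F[alpha][beta]. *)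

From HB Require Import structures.
From mathcomp Require Import all_boot all_order all_algebra.
From mathcomp Require Import fraction generic_quotient.
From mathcomp Require Import mpoly.
From mathcomp Require Import ring zify.
From Stdlib Require Import Classical.
Set Implicit Arguments. Unset Strict Implicit. Unset Printing Implicit Defensive.
Import Order.TTheory GRing.Theory.
Local Open Scope ring_scope.

Section Divisibility.
Variable R : comUnitRingType.
Implicit Types d f r x y z : R.

Definition divides d x := exists r, x = r * d.

Definition irreducible_elem x := [/\ x != 0, x \isn't a GRing.unit &
  forall y z, x = y * z -> y \is a GRing.unit \/ z \is a GRing.unit].

Definition prime_elem x := [/\ x != 0, x \isn't a GRing.unit &
  forall y z, divides x (y * z) -> divides x y \/ divides x z].

Lemma divides_refl x : divides x x.
Proof. by exists 1; rewrite mul1r. Qed.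

Lemma divides_trans y x z : divides x y -> divides y z -> divides x z.
Proof. by move=> [r ->] [s ->]; exists (s * r); rewrite mulrA. Qed.

Lemma divides_mull y d x : divides d x -> divides d (y * x).
Proof. by move=> [r ->]; exists (y * r); rewrite mulrA. Qed.

Lemma divides_mulr y d x : divides d x -> divides d (x * y).
Proof. by rewrite mulrC; apply: divides_mull. Qed.

Lemma dividesD d x y : divides d x -> divides d y -> divides d (x + y).
Proof. by move=> [r ->] [s ->]; exists (r + s); rewrite mulrDl. Qed.

Lemma divides_unit d x : d \is a GRing.unit -> divides d x.
Proof. by move=> dU; exists (x / d); rewrite divrK. Qed.

Lemma irreducible_divides f r :
  irreducible_elem f -> divides r f -> r \isn't a GRing.unit -> divides f r.
Proof.
move=> [_ _ f_irr] [K def_f] rNU; have [KU|rU] := f_irr _ _ def_f.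
  by exists K^-1; rewrite def_f mulrA mulVr ?mul1r.
by rewrite rU in rNU.
Qed.

End Divisibility.

Lemma divides_rmorph (R S : comUnitRingType) (f : {rmorphism R -> S}) d x :
  divides d x -> divides (f d) (f x).
Proof. by move=> [r ->]; exists (f r); rewrite rmorphM. Qed.

Section RingIso.
Variables (R1 R2 : comUnitRingType).
Variables (phi : {rmorphism R1 -> R2}) (psi : {rmorphism R2 -> R1}).
Hypotheses (phiK : cancel phi psi) (psiK : cancel psi phi).

Lemma iso_divides d x : divides (phi d) (phi x) <-> divides d x.
Proof.
split; last exact: divides_rmorph.
by move/(divides_rmorph psi); rewrite !phiK.
Qed.

Lemma iso_eq0 x : (phi x == 0) = (x == 0).
Proof. by rewrite -(can_eq phiK) rmorph0. Qed.

Lemma iso_unit x : (phi x \is a GRing.unit) = (x \is a GRing.unit).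
Proof.
apply/idP/idP; last exact: rmorph_unit.
by move/(rmorph_unit psi); rewrite phiK.
Qed.

Lemma iso_irreducible x : irreducible_elem (phi x) <-> irreducible_elem x.
Proof.
split=> -[x0 xU x_irr].
  split; [by rewrite -iso_eq0 | by rewrite -iso_unit | move=> y z].
  by move/(congr1 phi); rewrite rmorphM => /x_irr; rewrite !iso_unit.
split; [by rewrite iso_eq0 | by rewrite iso_unit | move=> y z].
rewrite -(psiK y) -(psiK z) -rmorphM => /(can_inj phiK) /x_irr.
by rewrite !iso_unit.
Qed.

Lemma iso_prime x : prime_elem (phi x) <-> prime_elem x.
Proof.
split=> -[x0 xU x_prime].
  split; [by rewrite -iso_eq0 | by rewrite -iso_unit | move=> y z].
  by rewrite -!iso_divides rmorphM => /x_prime.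
split; [by rewrite iso_eq0 | by rewrite iso_unit | move=> y z].
by rewrite -(psiK y) -(psiK z) -rmorphM !iso_divides => /x_prime.
Qed.

End RingIso.

Lemma divides_mul2r (R : idomainType) (c d x : R) :
  c != 0 -> divides (d * c) (x * c) -> divides d x.
Proof. by move=> c0 [r]; rewrite mulrA => /(mulIf c0) ->; exists r. Qed.

Section Content.
Variable F : fieldType.
Local Notation A := {poly F}.
Local Notation B := {poly A}.
Implicit Types (a c pi : A) (P Q : B).

Lemma irredp_dvdM pi a c :
  irreducible_poly pi -> pi %| a * c -> (pi %| a) || (pi %| c).
Proof.
move=> pi_irr; have [//|pi_a /=] := boolP (pi %| a).
by rewrite Gauss_dvdpr // irreducible_poly_coprime.
Qed.

Lemma dividesC_coef c P : c != 0 -> divides c%:P P <-> forall i, c %| P`_i.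
Proof.
move=> c0; split=> [[r ->] i|dvdP]; first by rewrite coefMC dvdp_mull.
exists (\poly_(i < size P) (P`_i %/ c)); apply/polyP => i.
rewrite coefMC coef_poly; case: ltnP => [_|/(nth_default 0)->]; last first.
  by rewrite mul0r.
by rewrite divpK.
Qed.

Lemma Gauss_coef0 pi P Q : irreducible_poly pi -> ~~ (pi %| P`_0) ->
  (forall k, pi %| (P * Q)`_k) -> forall j, pi %| Q`_j.
Proof.
move=> pi_irr piNP0; elim/poly_ind: Q => [|Q d IHQ] dvdPQ.
  by move=> j; rewrite coef0 dvdp0.
have pi_d : pi %| d.
  have := dvdPQ 0%N; rewrite coef0M coefD coefMX coefC /= add0r.
  by move/(irredp_dvdM pi_irr); rewrite (negbTE piNP0).
have {}IHQ : forall j, pi %| Q`_j.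
  apply: IHQ => k; have := dvdPQ k.+1.
  by rewrite mulrDr coefD mulrA coefMX coefMC (dvdp_addl _ (dvdp_mull _ pi_d)).
by case=> [|j]; rewrite coefD coefMX coefC /= ?add0r ?addr0.
Qed.

Lemma Gauss_coef pi P Q : irreducible_poly pi ->
  (forall k, pi %| (P * Q)`_k) -> (forall i, pi %| P`_i) \/ (forall j, pi %| Q`_j).
Proof.
move=> pi_irr; elim/poly_ind: P Q => [|P c IHP] Q dvdPQ.
  by left=> i; rewrite coef0 dvdp0.
have [pi_c|piNc] := boolP (pi %| c); last first.
  right; apply: (Gauss_coef0 pi_irr _ dvdPQ).
  by rewrite coefD coefMX coefC /= add0r.
have dvdPQ' : forall k, pi %| (P * Q)`_k.
  move=> k; have := dvdPQ k.+1.
  by rewrite mulrDl coefD mulrAC coefMX coefCM (dvdp_addl _ (dvdp_mulr _ pi_c)).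
have [dvdP|] := IHP Q dvdPQ'; [left|by right].
by case=> [|i]; rewrite coefD coefMX coefC /= ?add0r ?addr0.
Qed.

Lemma irreducible_polyC_prime pi P Q : irreducible_poly pi ->
  divides pi%:P (P * Q) -> divides pi%:P P \/ divides pi%:P Q.
Proof.
move=> pi_irr; have pi0 := irredp_neq0 pi_irr.
by rewrite !dividesC_coef //; apply: Gauss_coef.
Qed.

Lemma irredp_dvdp_exists a : (1 < size a)%N -> exists2 pi, irreducible_poly pi & pi %| a.
Proof.
have [n] := ubnP (size a); elim: n a => // n IHn a sz_a a_gt1.
have [a_irr|a_red] := classic (irreducible_poly a); first by exists a.
have [q [q_ne1 q_a q_Na]] : exists q : A, [/\ (size q != 1)%N, q %| a & ~~ (q %= a)].
  apply: NNPP => noq; apply: a_red; split=> // q q_ne1 q_a.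
  by apply/negPn/negP => q_Na; apply: noq; exists q.
have a0 : a != 0 by rewrite -size_poly_gt0 ltnW.
have q0 : q != 0 by apply: contraTneq q_a => ->; rewrite dvd0p.
have lt_q_a : (size q < size a)%N.
  by rewrite ltn_neqAle dvdp_size_eqp // q_Na dvdp_leq.
have q_gt1 : (1 < size q)%N by rewrite ltn_neqAle eq_sym q_ne1 size_poly_gt0.
have [pi pi_irr pi_q] := IHn q (leq_trans lt_q_a sz_a) q_gt1.
by exists pi => //; apply: dvdp_trans q_a.
Qed.

Definition primitive P := forall pi, irreducible_poly pi -> ~ divides pi%:P P.

Lemma polyC_unit c : (c%:P \is a GRing.unit) = (c \is a GRing.unit).
Proof.
rewrite poly_unitE size_polyC coefC /=.
by have [->|] := eqVneq c 0; rewrite ?unitr0.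
Qed.

Lemma unitp_size a : (a \is a GRing.unit) = (size a == 1%N).
Proof.
by rewrite poly_unitE; case: size_poly1P => [[c c0 ->]|//]; rewrite coefC unitfE.
Qed.

Lemma primitive_dividesC P K a :
  primitive P -> a != 0 -> divides a%:P (P * K) -> divides a%:P K.
Proof.
move=> P_prim; have [n] := ubnP (size a); elim: n a K => // n IHn a K sz_a a0 a_PK.
have [a_gt1|a_le1] := ltnP 1 (size a); last first.
  apply: divides_unit; rewrite polyC_unit unitp_size eqn_leq a_le1.
  by rewrite size_poly_gt0.
have [pi pi_irr /dvdpP[a1 def_a]] := irredp_dvdp_exists a_gt1.
have pi0 : pi%:P != 0 :> B by rewrite polyC_eq0 irredp_neq0.
have a10 : a1 != 0 by apply: contraNneq a0 => a10; rewrite def_a a10 mul0r.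
have lt_a1_n : (size a1 < n)%N.
  have [pi_gt1 _] := pi_irr; move: sz_a; rewrite def_a size_mul ?(irredp_neq0 pi_irr) //.
  by move: (size a1) (size pi) pi_gt1 => k l; lia.
rewrite def_a polyCM in a_PK *.
have [P_pi|[K1 def_K]] := irreducible_polyC_prime pi_irr
  (divides_trans (divides_mull _ (divides_refl _)) a_PK).
  by case: (P_prim pi pi_irr P_pi).
move: a_PK; rewrite def_K mulrA => /(divides_mul2r pi0) a1_PK1.
have [K2 ->] := IHn a1 K1 lt_a1_n a10 a1_PK1.
by exists K2; rewrite mulrA.
Qed.
End Content.

Section BivariatePrime.
Variable F : fieldType.
Local Notation A := {poly F}.
Local Notation B := {poly A}.
Implicit Types (a c pi : A) (f g h r P Q : B).

Lemma primitive_divides_scaled f a h : primitive f -> a != 0 ->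
  divides f (a%:P * h) -> divides f h.
Proof.
move=> f_prim a0 [K def_aK].
have [K1 def_K] : divides a%:P K.
  by apply: (primitive_dividesC f_prim a0); exists h; rewrite mulrC -def_aK mulrC.
exists K1; apply: (mulfI (_ : a%:P != 0)); first by rewrite polyC_eq0.
by rewrite def_aK def_K mulrAC mulrC.
Qed.

Lemma primitive_divides_modp r x : primitive r -> r != 0 -> x %% r = 0 ->
  divides r x.
Proof.
move=> r_prim r0 mod0; have := Pdiv.Idomain.divp_eq x r.
rewrite mod0 addr0 -mul_polyC => def_x.
have d0 : lead_coef r ^+ scalp x r != 0 by rewrite expf_neq0 // lead_coef_eq0.
by apply: (primitive_divides_scaled r_prim d0); rewrite def_x; exists (x %/ r).
Qed.

Lemma irreducible_primitive f : irreducible_elem f -> (1 < size f)%N -> primitive f.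
Proof.
move=> [f0 _ f_irr] f_gt1 pi pi_irr [f' def_f].
have [f'U|] := f_irr _ _ def_f.
  move: f'U f_gt1; rewrite poly_unitE def_f mulrC size_Cmul ?(irredp_neq0 pi_irr) //.
  by case/andP=> /eqP->.
by rewrite polyC_unit unitp_size; case: pi_irr => /gtn_eqF->.
Qed.

Lemma irreducible_elemC c : irreducible_elem c%:P -> irreducible_poly c.
Proof.
move=> [c0 cNU c_irr]; rewrite polyC_eq0 in c0; rewrite polyC_unit unitp_size in cNU.
split=> [|q q_ne1 /dvdpP[k def_c]].
  by rewrite ltn_neqAle eq_sym cNU size_poly_gt0.
move/(congr1 polyC): (def_c); rewrite polyCM => /c_irr[].
  rewrite polyC_unit unitp_size => /size_poly1P[e e0 def_k].
  by rewrite def_c def_k mul_polyC eqp_sym eqp_scale.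
by rewrite polyC_unit unitp_size (negbTE q_ne1).
Qed.

Section ScaledCombination.
Variables f g h : B.
Hypotheses (f_irr : irreducible_elem f) (f_gt1 : (1 < size f)%N).
Hypothesis f_gh : divides f (g * h).

(* Some r of least size, then of least leading coefficient, with a nonzero constant
   multiple in the ideal (f, g) is either constant, forcing f | h, or primitive, and then
   it divides f and g, forcing f | g. *)
Definition scaled_comb r := exists c l m, c != 0 /\ c%:P * r = l * f + m * g.

Lemma scaled_combB l' m' Q r :
  scaled_comb r -> scaled_comb (l' * f + m' * g - Q * r).
Proof.
move=> [c [l [m [c0 def_cr]]]].
exists c, (c%:P * l' - Q * l), (c%:P * m' - Q * m); split=> //.
by rewrite mulrBr mulrCA def_cr; ring.
Qed.

Lemma scaled_combMC c r : c != 0 -> scaled_comb (r * c%:P) -> scaled_comb r.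
Proof.
move=> c0 [d [l [m [d0 def_dr]]]].
by exists (d * c), l, m; rewrite mulf_neq0 // polyCM -mulrA [c%:P * _]mulrC.
Qed.

Lemma scaled_comb_modp l' m' r :
  scaled_comb r -> scaled_comb ((l' * f + m' * g) %% r).
Proof.
move=> r_comb; set x := l' * f + m' * g; set d := lead_coef r ^+ scalp x r.
have -> : x %% r = d *: x - x %/ r * r.
  by rewrite Pdiv.Idomain.divp_eq (addrC (x %/ r * r)) addrK.
have := scaled_combB (d%:P * l') (d%:P * m') (x %/ r) r_comb.
by rewrite -!mulrA -mulrDr mul_polyC.
Qed.

Lemma scaled_comb_const r : (size r <= 1)%N -> r != 0 -> scaled_comb r ->
  divides f h.
Proof.
move=> /size1_polyC ->; rewrite polyC_eq0 => r0 [c [l [m [c0 def_cr]]]].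
apply: (primitive_divides_scaled (irreducible_primitive f_irr f_gt1) (mulf_neq0 c0 r0)).
rewrite polyCM def_cr mulrDl -mulrA -mulrA.
by apply: dividesD; [apply: divides_mull; apply: divides_mulr; apply: divides_refl|
  apply: divides_mull].
Qed.

Lemma divides_scaled_comb r : r != 0 -> scaled_comb r ->
  divides f g \/ divides f h.
Proof.
have [n] := ubnP (size r); elim: n r => // n IHn r.
have [k] := ubnP (size (lead_coef r)); elim: k r => // k IHk r lt_lc lt_r r0 r_comb.
have [r_gt1|r_le1] := ltnP 1 (size r); last first.
  by right; apply: scaled_comb_const r_le1 r0 r_comb.
have [[pi [pi_irr [r' def_r]]]|r_prim] :=
  classic (exists pi, irreducible_poly pi /\ divides pi%:P r).
  have pi0 := irredp_neq0 pi_irr.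
  have r'0 : r' != 0 by apply: contraNneq r0 => r'0; rewrite def_r r'0 mul0r.
  apply: (IHk r') => //; last by apply: scaled_combMC pi0 _; rewrite -def_r.
    have [pi_gt1 _] := pi_irr; move: lt_lc.
    rewrite def_r lead_coefM lead_coefC size_mul ?lead_coef_eq0 //.
    by move: (size (lead_coef r')) (size pi) pi_gt1 => x y; lia.
  by move: lt_r; rewrite def_r mulrC size_Cmul.
have {}r_prim : primitive r by move=> pi pi_irr pi_r; apply: r_prim; exists pi.
have r_divides l' m' : divides r (l' * f + m' * g) \/ divides f g \/ divides f h.
  have [mod0|mod_neq0] := eqVneq ((l' * f + m' * g) %% r) 0.
    by left; apply: primitive_divides_modp.
  right; apply: (IHn _ _ mod_neq0 (scaled_comb_modp l' m' r_comb)).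
  exact: leq_trans (Pdiv.Idomain.ltn_modpN0 _ r0) lt_r.
have := r_divides 1 0; rewrite mul1r mul0r addr0 => -[r_f|//].
have := r_divides 0 1; rewrite mul1r mul0r add0r => -[r_g|//].
left; apply: (divides_trans _ r_g); apply: (irreducible_divides f_irr r_f).
by rewrite poly_unitE gtn_eqF.
Qed.
End ScaledCombination.

Lemma irreducible_prime_bivariate f : irreducible_elem f -> prime_elem f.
Proof.
move=> f_irr; have [f0 fNU _] := f_irr; split=> // g h f_gh.
have [f_gt1|/size1_polyC def_f] := ltnP 1 (size f).
  apply: (divides_scaled_comb f_irr f_gt1 f_gh f0).
  by exists 1, 1, 0; rewrite oner_neq0 polyC1 !mul1r mul0r addr0.
rewrite def_f in f_irr f_gh *.
exact: irreducible_polyC_prime (irreducible_elemC f_irr) f_gh.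
Qed.
End BivariatePrime.

Lemma mpoly_rmorph_ext (n : nat) (K : nzRingType) (T : nzRingType)
    (f g : {rmorphism {mpoly K[n]} -> T}) :
  (forall c, f c%:MP = g c%:MP) -> (forall i, f 'X_i = g 'X_i) -> f =1 g.
Proof.
move=> eq_fgC eq_fgX; elim/mpolyind => [|c m p _ _ IHp]; first by rewrite !rmorph0.
rewrite !rmorphD IHp -mul_mpolyC !rmorphM eq_fgC mpolyXE_id !rmorph_prod.
by congr (_ * _ + _); apply: eq_bigr => i _; rewrite !rmorphXn eq_fgX.
Qed.

Lemma poly2_rmorph_ext (K : nzRingType) (T : nzRingType)
    (f g : {rmorphism {poly {poly K}} -> T}) :
  f 'X = g 'X -> f 'X%:P = g 'X%:P -> (forall c, f c%:P%:P = g c%:P%:P) -> f =1 g.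
Proof.
move=> eq_fgX eq_fgY eq_fgC.
have eq_fgA a : f a%:P = g a%:P.
  elim/poly_ind: a => [|a c IHa]; first by rewrite !rmorph0.
  by rewrite polyCD polyCM !rmorphD !rmorphM IHa eq_fgY eq_fgC.
elim/poly_ind => [|P a IHP]; first by rewrite !rmorph0.
by rewrite !rmorphD !rmorphM IHP eq_fgX eq_fgA.
Qed.

Lemma ord2P (i : 'I_2) : i = 0 \/ i = 1.
Proof. by case: i => -[|[|//]] ?; [left|right]; apply: val_inj. Qed.

Section BivariateIso.
Variable F : fieldType.
Local Notation A := {poly F}.
Local Notation B := {poly A}.
Local Notation R := {mpoly F[2]}.

Definition poly2_var (i : 'I_2) : B := if i == 0 then 'X else 'X%:P.

Definition poly2_of_mpoly : {rmorphism R -> B} := mmap (polyC \o polyC) poly2_var.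

Definition mpoly_of_poly2 : {rmorphism B -> R} :=
  horner_eval (alpha F) \o map_poly (horner_eval (beta F) \o map_poly (@mpolyC 2 F)).

Lemma poly2_of_mpolyK : cancel poly2_of_mpoly mpoly_of_poly2.
Proof.
apply: (@mpoly_rmorph_ext _ _ _ (mpoly_of_poly2 \o poly2_of_mpoly) idfun) => [c|i].
  rewrite /= mmapC /= map_polyC horner_evalE hornerC /=.
  by rewrite horner_evalE map_polyC hornerC.
rewrite /= mmapX mmap1U /poly2_var; case: (ord2P i) => -> /=.
  by rewrite map_polyX horner_evalE hornerX.
by rewrite map_polyC horner_evalE hornerC /= map_polyX horner_evalE hornerX.
Qed.

Lemma mpoly_of_poly2K : cancel mpoly_of_poly2 poly2_of_mpoly.
Proof.
apply: (@poly2_rmorph_ext _ _ (poly2_of_mpoly \o mpoly_of_poly2) idfun).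
- by rewrite /= map_polyX horner_evalE hornerX mmapX mmap1U.
- rewrite /= map_polyC horner_evalE hornerC /= map_polyX horner_evalE hornerX.
  by rewrite mmapX mmap1U.
- move=> c; rewrite /= map_polyC horner_evalE hornerC /=.
  by rewrite horner_evalE map_polyC hornerC mmapC.
Qed.

Lemma irreducible_prime_mpoly (f : R) : irreducible_elem f -> prime_elem f.
Proof.
move=> /(iso_irreducible poly2_of_mpolyK mpoly_of_poly2K).
by move/irreducible_prime_bivariate/(iso_prime poly2_of_mpolyK mpoly_of_poly2K).
Qed.

End BivariateIso.

Section TotalDegree.
Variable F : fieldType.
Local Notation R := {mpoly F[2]}.
Implicit Types f p x y : R.

Lemma mpoly_unitE p : (p \is a GRing.unit) = (msize p == 1%N).
Proof.
apply/idP/msize_poly1P => [/andP[/eqP def_p p0U]|[c c0 ->]].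
  by exists p@_0 => //; rewrite -unitfE.
by rewrite unfold_in /= /mpoly_unit mcoeffC eqxx mulr1 eqxx unitfE.
Qed.

Lemma tdeg_gt0 p : (0 < tdeg p)%N = (p != 0) && (p \isn't a GRing.unit).
Proof.
by rewrite mpoly_unitE -msize_poly_eq0 /tdeg; case: (msize p) => [|[]].
Qed.

Lemma tdegM x y : x != 0 -> y != 0 -> tdeg (x * y) = (tdeg x + tdeg y)%N.
Proof.
move=> x0 y0; rewrite /tdeg msizeM // (mpolySpred _ x0) (mpolySpred _ y0).
by rewrite addSn addnS.
Qed.

Lemma is_constE p : is_const p <-> tdeg p = 0%N.
Proof.
rewrite /tdeg; split=> [[c ->]|p_le1]; first by rewrite msizeC; case: (c == 0).
by exists p@_0; apply: msize1_polyC; move: p_le1; case: (msize p) => [|[]].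
Qed.

Lemma prime_tdeg_gt0 f : prime_elem f -> (0 < tdeg f)%N.
Proof. by case=> f0 fNU _; rewrite tdeg_gt0 f0. Qed.

Lemma irreducible_factor p : (0 < tdeg p)%N ->
  exists2 f, irreducible_elem f & divides f p.
Proof.
have [n] := ubnP (tdeg p); elim: n p => // n IHn p lt_p p_gt0.
have [p_irr|p_red] := classic (irreducible_elem p).
  by exists p => //; apply: divides_refl.
move: (p_gt0); rewrite tdeg_gt0 => /andP[p0 pNU].
have [x [y [def_p xNU yNU]]] :
    exists x y, [/\ p = x * y, x \isn't a GRing.unit & y \isn't a GRing.unit].
  apply: NNPP => no_split; apply: p_red; split=> // x y def_p.
  by apply: NNPP => /not_or_and[/negP xNU /negP yNU]; apply: no_split; exists x, y.
have x0 : x != 0 by apply: contraNneq p0 => x0; rewrite def_p x0 mul0r.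
have y0 : y != 0 by apply: contraNneq p0 => y0; rewrite def_p y0 mulr0.
have x_gt0 : (0 < tdeg x)%N by rewrite tdeg_gt0 x0.
have y_gt0 : (0 < tdeg y)%N by rewrite tdeg_gt0 y0.
have lt_x : (tdeg x < n)%N by move: lt_p; rewrite def_p tdegM //; lia.
have [f f_irr f_x] := IHn x lt_x x_gt0.
by exists f => //; rewrite def_p; apply: divides_mulr.
Qed.

Lemma prime_factor p : (0 < tdeg p)%N -> exists2 f, prime_elem f & divides f p.
Proof.
by case/irreducible_factor => f /irreducible_prime_mpoly f_prime f_p; exists f.
Qed.
End TotalDegree.

Definition spread_nonempty (F : fieldType) (S : {mpoly F[2]} -> {mpoly F[2]})
    (p q : {mpoly F[2]}) :=
  (exists m, gcd_deg_pos p (iter m S q)) \/ (exists m, gcd_deg_pos q (iter m S p)).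

Lemma spread_nonemptyC (F : fieldType) (S : {mpoly F[2]} -> {mpoly F[2]}) p q :
  spread_nonempty S p q -> spread_nonempty S q p.
Proof. by case; [right|left]. Qed.

Section Descent.
Variable F : fieldType.
Local Notation R := {mpoly F[2]}.
Variables S T : {rmorphism R -> R}.
Hypotheses (SK : cancel S T) (TK : cancel T S).
Variables p q f0 : R.
Hypotheses (f0_prime : prime_elem f0) (f0_p : divides f0 p).
Implicit Types a b f P : R.

Lemma divides_iter k d x : divides d x -> divides (iter k S d) (iter k S x).
Proof. by elim: k => //= k IHk /IHk /(divides_rmorph S). Qed.

Lemma prime_iter k f : prime_elem f -> prime_elem (iter k S f).
Proof. by elim: k => //= k IHk /IHk /(iso_prime SK TK). Qed.

(* f is associate to S^j f0 for some integer j, negative j being encoded as f0 | S^k f *)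
Definition linked f := exists k, divides (iter k S f0) f \/ divides f0 (iter k S f).

Lemma linked_refl : linked f0.
Proof. by exists 0%N; left; apply: divides_refl. Qed.

Lemma linkedS f : linked f -> linked (S f).
Proof.
case=> -[|k] [f0_f|f0_f]; first by exists 1%N; left; apply: divides_rmorph.
- by exists 1%N; left; apply: divides_rmorph.
- by exists k.+2; left; rewrite iterS; apply: divides_rmorph.
- by exists k; right; rewrite -iterSr.
Qed.

Lemma linkedT f : linked (S f) -> linked f.
Proof.
case=> -[|k] [f0_f|f0_f]; first by exists 1%N; right.
- by exists 1%N; right.
- by exists k; left; rewrite -(iso_divides SK) -iterS.
- by exists k.+2; right; rewrite iterSr.
Qed.

Lemma linked_spread f : divides f q -> linked f -> spread_nonempty S p q.
Proof.
move=> f_q [k [f0_f|f0_f]].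
  right; exists k; exists (iter k S f0).
  split; first exact/prime_tdeg_gt0/prime_iter.
  by split; [apply: divides_trans f0_f f_q|apply: divides_iter].
left; exists k; exists f0; split; first exact: prime_tdeg_gt0.
by split=> //; apply: divides_trans f0_f (divides_iter k f_q).
Qed.

Lemma descent a b P f : a != 0 -> b != 0 -> P * a * S b = q * S a * b ->
  prime_elem f -> divides f P -> linked f -> spread_nonempty S p q.
Proof.
have [n] := ubnP (tdeg a + tdeg b); elim: n a b P f => // n IHn a b P f.
move=> lt_ab a0 b0 eq_ab f_prime [P' def_P] f_linked.
have [f_q|fNq] := classic (divides f q); first exact: linked_spread f_q f_linked.
have [f_neq0 fNU f_dvd] := f_prime; have f_gt0 := prime_tdeg_gt0 f_prime.
have : divides f (q * (S a * b)).
  by exists (P' * a * S b); rewrite mulrA -eq_ab def_P !(mulrAC _ f).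
case/f_dvd=> [//|/f_dvd[[r def_Sa]|[b' def_b]]].
  have def_a : a = T r * T f by rewrite -rmorphM -def_Sa SK.
  have Tf_prime : prime_elem (T f) by rewrite -(iso_prime SK TK) TK.
  have [Tr0 Tf0] : T r != 0 /\ T f != 0.
    by apply/andP; rewrite -negb_or -mulf_eq0 -def_a.
  apply: (IHn (T r) b (P' * T f) (T f)) => //.
  - by move: lt_ab; rewrite def_a tdegM //; have := prime_tdeg_gt0 Tf_prime; lia.
  - apply: (mulIf f_neq0); transitivity (P * a * S b).
      by rewrite def_P def_a; ring.
    by rewrite eq_ab def_Sa TK; ring.
  - by exists P'.
  - by apply: linkedT; rewrite TK.
have b'0 : b' != 0 by apply: contraNneq b0 => b'0; rewrite def_b b'0 mul0r.
apply: (IHn a b' (P' * S f) (S f)) => //.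
- by move: lt_ab; rewrite def_b tdegM //; lia.
- apply: (mulIf f_neq0); transitivity (P * a * S b).
    by rewrite def_P def_b rmorphM; ring.
  by rewrite eq_ab def_b; ring.
- by rewrite (iso_prime SK TK).
- by exists P'.
- exact: linkedS.
Qed.

End Descent.

Lemma spread_nonempty_of_eq (F : fieldType) (S T : {rmorphism {mpoly F[2]} -> {mpoly F[2]}})
    (p q a b : {mpoly F[2]}) :
  cancel S T -> cancel T S -> a != 0 -> b != 0 -> p * a * S b = q * S a * b ->
  (0 < tdeg p)%N || (0 < tdeg q)%N -> spread_nonempty S p q.
Proof.
move=> SK TK a0 b0 eq_ab /orP[p_gt0|q_gt0].
  have [f f_prime f_p] := prime_factor p_gt0.
  apply: (descent SK TK f_prime f_p a0 b0 eq_ab f_prime f_p).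
  exact: linked_refl.
have [f f_prime f_q] := prime_factor q_gt0.
have eq_ba : q * b * S a = p * S b * a by rewrite mulrAC -eq_ab mulrAC.
apply: spread_nonemptyC.
apply: (descent SK TK f_prime f_q b0 a0 eq_ba f_prime f_q).
exact: linked_refl.
Qed.

Section Sigma.
Variables (F : fieldType) (s : {rmorphism F -> F}) (u v : F).
Local Notation R := {mpoly F[2]}.

Definition sigma_mpoly : {rmorphism R -> R} := mmap (@mpolyC 2 F \o s) (sigma_var u v).

Lemma sigma_mpolyC c : sigma_mpoly c%:MP = (s c)%:MP.
Proof. exact: mmapC. Qed.

Lemma sigma_mpolyX i : sigma_mpoly 'X_i = sigma_var u v i.
Proof. by rewrite /= mmapX mmap1U. Qed.

Variable s' : F -> F.
Hypotheses (sK : cancel s s') (s'K : cancel s' s) (u0 : u != 0).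

Definition sinv := s'.
HB.instance Definition _ :=
  GRing.isZmodMorphism.Build F F sinv (can2_zmod_morphism sK s'K).
HB.instance Definition _ :=
  GRing.isMonoidMorphism.Build F F sinv (can2_monoid_morphism sK s'K).

(* Solving sigma beta = u alpha + v beta for alpha. *)
Definition sigma_inv_var (i : 'I_2) : R :=
  if i == 0 then (sinv (- v / u))%:MP * alpha F + (sinv u^-1)%:MP * beta F
  else alpha F.

Definition sigma_inv : {rmorphism R -> R} := mmap (@mpolyC 2 F \o sinv) sigma_inv_var.

Lemma sigma_invC c : sigma_inv c%:MP = (sinv c)%:MP.
Proof. exact: mmapC. Qed.

Lemma sigma_invX i : sigma_inv 'X_i = sigma_inv_var i.
Proof. by rewrite /= mmapX mmap1U. Qed.

Lemma sigma_mpolyK : cancel sigma_mpoly sigma_inv.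
Proof.
apply: (@mpoly_rmorph_ext _ _ _ (sigma_inv \o sigma_mpoly) idfun) => [c|i] /=.
  by rewrite sigma_mpolyC sigma_invC /sinv sK.
rewrite sigma_mpolyX /sigma_var; case: (ord2P i) => -> /=.
  by rewrite sigma_invX.
rewrite rmorphD !rmorphM !sigma_invC !sigma_invX /sigma_inv_var /=.
have e1 : sinv u * sinv (- v / u) + sinv v = 0.
  by rewrite -rmorphM -rmorphD mulrCA mulfV // mulr1 addNr rmorph0.
have e2 : sinv u * sinv u^-1 = 1 by rewrite -rmorphM mulfV // rmorph1.
transitivity ((sinv u * sinv (- v / u) + sinv v)%:MP * alpha F
              + (sinv u * sinv u^-1)%:MP * beta F).
  by rewrite mpolyCD !mpolyCM; ring.
by rewrite e1 e2 mpolyC0 mpolyC1 mul0r add0r mul1r.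
Qed.

Lemma sigma_invK : cancel sigma_inv sigma_mpoly.
Proof.
apply: (@mpoly_rmorph_ext _ _ _ (sigma_mpoly \o sigma_inv) idfun) => [c|i] /=.
  by rewrite sigma_invC sigma_mpolyC /sinv s'K.
rewrite sigma_invX /sigma_inv_var; case: (ord2P i) => -> /=; last first.
  by rewrite sigma_mpolyX.
rewrite rmorphD !rmorphM !sigma_mpolyC !sigma_mpolyX /sigma_var /sinv !s'K /=.
have e1 : u^-1 * u = 1 by rewrite mulVf.
have e2 : - v / u + u^-1 * v = 0 by rewrite mulrC mulrN addNr.
transitivity ((u^-1 * u)%:MP * alpha F + (- v / u + u^-1 * v)%:MP * beta F).
  by rewrite mpolyCD !mpolyCM; ring.
by rewrite e1 e2 mpolyC0 mpolyC1 mul0r addr0 mul1r.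
Qed.

End Sigma.

Section FractionRepr.
Local Open Scope quotient_scope.

Lemma fraction_numden (R : idomainType) (g : {fraction R}) :
  g = (\n_(repr g))%:F / (\d_(repr g))%:F.
Proof.
apply: (canRL (mulfK _)); first by rewrite tofrac_eq0 denom_ratioP.
set r := repr g; have -> : g = \pi_({fraction R}) r by rewrite /r reprK.
unlock FracField.tofrac; rewrite -[LHS]FracField.pi_mul.
apply/eqmodP; rewrite /= FracField.equivfE /FracField.mulf /=.
by rewrite !numden_Ratio ?(oner_eq0, mulf_neq0, mul1r, mulr1, denom_ratioP) // mulrC.
Qed.

End FractionRepr.

Lemma sigmaR_equation (F : fieldType) (s : {rmorphism F -> F}) (s' : F -> F)
    (u v : F) (g : {fraction {mpoly F[2]}}) (p q : {mpoly F[2]}) :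
  cancel s s' -> cancel s' s -> u != 0 -> g != 0 -> q != 0 ->
  sigmaR s u v g / g = p%:F / q%:F ->
  exists a b, [/\ a != 0, b != 0 &
    p * a * sigma_mpoly s u v b = q * sigma_mpoly s u v a * b].
Proof.
move=> sK s'K u0 g0 q0 eq_g; have def_g := fraction_numden g.
set a := \n_(repr g) in def_g eq_g; set b := \d_(repr g) in def_g eq_g.
have b0 : b != 0 := denom_ratioP _.
have a0 : a != 0 by apply: contraNneq g0 => a0; rewrite def_g a0 mul0r.
have Sb0 : sigma_mpoly s u v b != 0.
  by rewrite -(rmorph0 (sigma_mpoly s u v)) (can_eq (sigma_mpolyK v sK s'K u0)).
exists a, b; split=> //.
have : (sigma_mpoly s u v a)%:F / (sigma_mpoly s u v b)%:F / (a%:F / b%:F) =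
    p%:F / q%:F by rewrite -def_g.
move/eqP; rewrite invf_div mulf_div eqr_div ?mulf_neq0 ?tofrac_eq0 //.
rewrite -!tofracM tofrac_eq => /eqP eq_ab.
by rewrite -mulrA [a * _]mulrC -eq_ab mulrC mulrA.
Qed.

Theorem theorem2p4 (F : fieldType) (s : {rmorphism F -> F}) (u v : F)
  (s_bij : bijective s) (u_neq0 : u != 0)
  (g : {fraction {mpoly F[2]}}) (p q : {mpoly F[2]}) :
  g != 0 -> p != 0 -> q != 0 -> coprime_mp p q ->
  sigmaR s u v g / g = p%:F / q%:F ->
  (is_const p /\ is_const q) \/
  ((exists m : nat, in_Spr s u v p q m) \/ (exists m : nat, in_Spr s u v q p m)).
Proof.
move=> g0 _ q0 _ eq_g; have [s' sK s'K] := s_bij.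
have [a [b [a0 b0 eq_ab]]] := sigmaR_equation sK s'K u_neq0 g0 q0 eq_g.
have [/andP[/eqP/is_constE p_c /eqP/is_constE q_c]|nonconst] :=
  boolP ((tdeg p == 0%N) && (tdeg q == 0%N)); first by left.
right; rewrite negb_and -!lt0n in nonconst.
exact: spread_nonempty_of_eq (sigma_mpolyK v sK s'K u_neq0)
  (sigma_invK v sK s'K u_neq0) a0 b0 eq_ab nonconst.
Qed.
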